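(* Consider the input-delay system $\dot x(t)=f(x(t))+g(x(t))u(t-\tau)$, $\tau>0$, operating in an environment whose state satisfies $e(t+\vartheta)=\Gamma(\vartheta,e(t))$ and $\dot e(t+\vartheta)=\dot\Gamma(\vartheta,e(t),\dot e(t))$ for $\vartheta\in[0,\tau]$. Let $H:X\times E\to\mathbb{R}$ be continuously differentiable, $S_{\rm e}=\{(x,e)\in X\times E:H(x,e)\ge0\}$, and suppose $H$ is an ECBF for the delay system with extended class $\mathcal{K}$ function $\alpha$. Suppose Assumption 2 holds: the initial input history $u_0$ satisfies $(\Psi(\vartheta,x_0,u_0),\Gamma(\vartheta,e_0))\in S_{\rm e}$ for all $\vartheta\in[0,\tau]$. Then any locally Lipschitz continuous controller $u=K(x_{\rm p},e_{\rm p},\dot e_{\rm p})$ with $x_{\rm p}=\Psi(\tau,x,u_t)$, $e_{\rm p}=\Gamma(\tau,e)$, $\dot e_{\rm p}=\dot\Gamma(\tau,e,\dot e)$, satisfying $$\dot H(x_{\rm p},e_{\rm p},\dot e_{\rm p},u)\ge-\alpha(H(x_{\rm p},e_{\rm p}))$$ for all $(x,e)\in S_{\rm e}$, $\dot e\in\mathcal{E}$ and $u_t\in\mathcal{B}$, renders $S_{\rm e}$ forward invariant: $(x_0,e_0)\in S_{\rm e}\Rightarrow(x(t),e(t))\in S_{\rm e}$ for all $t\ge0$.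
   Context: $X\subseteq\mathbb{R}^n$ open connected, $U\subseteq\mathbb{R}^m$, $f,g$ locally Lipschitz, $u$ bounded and continuous a.e., solutions exist uniquely for $t\ge0$. Environment state $e(t)\in E\subseteq\mathbb{R}^l$, continuously differentiable, $\dot e(t)\in\mathcal{E}\subseteq\mathbb{R}^l$, $e(0)=e_0$; $\Gamma:[0,\tau]\times E\to E$, $\dot\Gamma:[0,\tau]\times E\times\mathcal{E}\to\mathcal{E}$ are the maps describing its future. $\mathcal{B}$: functions $[-\tau,0)\to U$ bounded and continuous a.e.; $u_t(\theta)=u(t+\theta)$, $\theta\in[-\tau,0)$. Semi-flow $\Psi(\vartheta,x,u_t)=x+\int_0^\vartheta\big(f(\Psi(\varphi,x,u_t))+g(\Psi(\varphi,x,u_t))u_t(\varphi-\tau)\big)d\varphi$, $\vartheta\in[0,\tau]$. $\dot H(x,e,\dot e,u)=\nabla_xH(x,e)(f(x)+g(x)u)+\nabla_eH(x,e)\dot e$. Extended class $\mathcal{K}$ function: continuous strictly increasing $\alpha:(-a,b)\to\mathbb{R}$, $a,b>0$, $\alpha(0)=0$. Definition: $H$ is an ECBF for the delay system with $\tau>0$ if there is an extended class $\mathcal{K}$ function $\alpha$ such that for all $(x,e)\in S_{\rm e}$, $\dot e\in\mathcal{E}$, $u_t\in\mathcal{B}$: $\sup_{u\in U}\dot H(x_{\rm p},e_{\rm p},\dot e_{\rm p},u)\ge-\alpha(H(x_{\rm p},e_{\rm p}))$ with $x_{\rm p}=\Psi(\tau,x,u_t)$, $e_{\rm p}=\Gamma(\tau,e)$,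 $\dot e_{\rm p}=\dot\Gamma(\tau,e,\dot e)$. *)

From HB Require Import structures.
From Stdlib Require Import Reals.
From mathcomp Require Import all_boot all_order all_algebra.
From mathcomp Require Import all_classical all_reals all_analysis.
From mathcomp Require Import Rstruct Rstruct_topology.
Set Implicit Arguments. Unset Strict Implicit. Unset Printing Implicit Defensive.
Import Order.TTheory GRing.Theory Num.Theory.
Import numFieldNormedType.Exports.
Local Open Scope classical_set_scope.
Local Open Scope ring_scope.

Definition RInt_vec (k : nat) (F : R -> 'cV[R]_k) (a b : R) (v : 'cV[R]_k) : Prop :=
  forall i : 'I_k, exists pr : Riemann_integrable (fun s => F s i ord0) a b,
    RiemannInt pr = v i ord0.

Definition ushift (m : nat) (u : R -> 'cV[R]_m) (t : R) : R -> 'cV[R]_m :=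
  fun theta => u (t + theta).

Definition inB (m : nat) (tau : R) (U : set 'cV[R]_m) (w : R -> 'cV[R]_m) : Prop :=
  (forall theta, - tau <= theta < 0 -> U (w theta)) /\
  (exists M : R, forall theta, - tau <= theta < 0 -> `|w theta| <= M) /\
  (@lebesgue_measure R).-negligible
     [set theta : R | - tau <= theta < 0 /\ ~ {for theta, continuous w}].

Definition rhs (n m : nat) (f : 'cV[R]_n -> 'cV[R]_n) (g : 'cV[R]_n -> 'M[R]_(n, m))
  (y : 'cV[R]_n) (v : 'cV[R]_m) : 'cV[R]_n := f y + g y *m v.

Definition pred_sol (n m : nat) (f : 'cV[R]_n -> 'cV[R]_n) (g : 'cV[R]_n -> 'M[R]_(n, m))
  (tau : R) (x : 'cV[R]_n) (w : R -> 'cV[R]_m) (y : R -> 'cV[R]_n) : Prop :=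
  forall th, 0 <= th <= tau ->
    RInt_vec (fun p => rhs f g (y p) (w (p - tau))) 0 th (y th - x).

Definition loc_lipschitz (V W : normedModType R) (A : set V) (h : V -> W) : Prop :=
  forall x, A x -> exists r : R, 0 < r /\ exists L : R,
    forall y z, A y -> A z -> `|y - x| < r -> `|z - x| < r ->
      `|h y - h z| <= L * `|y - z|.

(* Extended class K function alpha : (-a,b) -> R (given as a total function
   on R; only its values on (-a,b) are constrained). *)
Definition ext_classK (alpha : R -> R) : Prop :=
  exists a b : R, 0 < a /\ 0 < b /\ alpha 0 = 0 /\
    (forall x, - a < x < b -> {for x, continuous alpha}) /\
    (forall x y, - a < x < b -> - a < y < b -> x < y -> alpha x < alpha y).

Definition C1_on (n l : nat) (X : set 'cV[R]_n) (E : set 'cV[R]_l)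
  (H : 'cV[R]_n -> 'cV[R]_l -> R) : Prop :=
  exists O : set ('cV[R]_n * 'cV[R]_l), open O /\
    (forall x e, X x -> E e -> O (x, e)) /\
    (forall p, O p -> differentiable (fun q : 'cV[R]_n * 'cV[R]_l => (H q.1 q.2 : R^o)) p) /\
    (forall v p, O p -> {for p, continuous (fun q => 'd (fun q : 'cV[R]_n * 'cV[R]_l => (H q.1 q.2 : R^o)) q v)}).

Definition Hdot (n m l : nat) (f : 'cV[R]_n -> 'cV[R]_n) (g : 'cV[R]_n -> 'M[R]_(n, m))
  (H : 'cV[R]_n -> 'cV[R]_l -> R) (x : 'cV[R]_n) (e ed : 'cV[R]_l) (u : 'cV[R]_m) : R :=
  'd (fun y => (H y e : R^o)) x (rhs f g x u) + 'd (fun z => (H x z : R^o)) e ed.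

Definition Se (n l : nat) (X : set 'cV[R]_n) (E : set 'cV[R]_l)
  (H : 'cV[R]_n -> 'cV[R]_l -> R) (x : 'cV[R]_n) (e : 'cV[R]_l) : Prop :=
  X x /\ E e /\ 0 <= H x e.

Definition ECBF (n m l : nat) (X : set 'cV[R]_n) (U : set 'cV[R]_m)
  (E Ecal : set 'cV[R]_l) (f : 'cV[R]_n -> 'cV[R]_n) (g : 'cV[R]_n -> 'M[R]_(n, m))
  (tau : R) (Psi : R -> 'cV[R]_n -> (R -> 'cV[R]_m) -> 'cV[R]_n)
  (Gam : R -> 'cV[R]_l -> 'cV[R]_l) (dGam : R -> 'cV[R]_l -> 'cV[R]_l -> 'cV[R]_l)
  (H : 'cV[R]_n -> 'cV[R]_l -> R) (alpha : R -> R) : Prop :=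
  ext_classK alpha /\
  forall x e ed w, Se X E H x e -> Ecal ed -> inB tau U w ->
    let xp := Psi tau x w in let ep := Gam tau e in let edp := dGam tau e ed in
    ((- alpha (H xp ep))%:E <= ereal_sup [set (Hdot f g H xp ep edp u)%:E | u in U])%E.

From HB Require Import structures.
From Stdlib Require Import Reals.
From mathcomp Require Import all_boot all_order all_algebra.
From mathcomp Require Import all_classical all_reals all_analysis.
From mathcomp Require Import Rstruct Rstruct_topology.
From Stdlib Require Lra.
From Coquelicot Require Coquelicot.
Import Order.TTheory GRing.Theory Num.Theory.
Import numFieldNormedType.Exports.
Local Open Scope classical_set_scope.
Local Open Scope ring_scope.

Set Implicit Arguments.
Unset Strict Implicit.
Unset Printing Implicit Defensive.

(* Along the closed loop the controller acts on exact predictions,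
   x(t + tau) = Psi(tau, x(t), u_t) and e(t + tau) = Gam(tau, e(t)), so its defining
   inequality says that h(t) = H(x(t), e(t)) satisfies h'(t) >= -alpha(h(t)) at every
   t > tau for which the prediction made at time t - tau started in S_e, i.e.
   h(t - tau) >= 0.  Assumption 2 gives h >= 0 on [0, tau].  If h >= 0 on [0, T], then
   on [T, T + tau] the derivative of h is positive wherever h is slightly negative
   (alpha < 0 on (-a, 0)), so h cannot leave [0, +oo); the method of steps then
   propagates h >= 0 to all t >= 0. *)

Module RiemannPrimitive.
Import Coquelicot.Coquelicot Stdlib.micromega.Lra.
Local Open Scope R_scope.

Lemma RiemannInt_translate (F : R -> R) (t th : R)
  (pr1 : Riemann_integrable F 0 (t + th)) (pr2 : Riemann_integrable F 0 t) :
  0 <= t -> 0 <= th ->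
  exists pr : Riemann_integrable (fun p => F (t + p)) 0 th,
    RiemannInt pr = RiemannInt pr1 - RiemannInt pr2.
Proof.
move=> t0 th0.
have I0t := ex_RInt_Reals_1 _ _ _ pr2.
have Itt : ex_RInt F t (t + th).
  by apply: (ex_RInt_Chasles_2 F 0); [lra | exact: ex_RInt_Reals_1 pr1].
have Lin : ex_RInt F (1 * 0 + t) (1 * th + t).
  by rewrite Rmult_0_r Rmult_1_l Rplus_0_l Rplus_comm.
have Eshift p : scal 1 (F (1 * p + t)) = F (t + p).
  by rewrite scal_one Rmult_1_l Rplus_comm.
have Ishift : ex_RInt (fun p => F (t + p)) 0 th.
  exact: ex_RInt_ext (fun p _ => Eshift p) (ex_RInt_comp_lin F 1 t 0 th Lin).
exists (ex_RInt_Reals_0 _ _ _ Ishift); rewrite -!RInt_Reals.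
have Chasles : RInt F 0 t + RInt F t (t + th) = RInt F 0 (t + th).
  exact: RInt_Chasles I0t Itt.
have Shift : RInt (fun p => F (t + p)) 0 th = RInt F t (t + th).
  rewrite -(RInt_ext _ _ _ _ (fun p _ => Eshift p)) (RInt_comp_lin F 1 t 0 th Lin).
  by rewrite Rmult_0_r Rmult_1_l Rplus_0_l Rplus_comm.
rewrite Shift -Chasles; lra.
Qed.

Section primitive.
Variables F G : R -> R.
Hypothesis FG :
  forall r, 0 <= r -> exists pr : Riemann_integrable F 0 r, RiemannInt pr = G r - G 0.

Let primitive_is_RInt_near s : 0 < s -> locally s (fun z => is_RInt F 0 z (G z - G 0)).
Proof.
move=> s0; apply: filter_imp (open_gt 0 s s0) => z /Rlt_le /FG [pr <-].
exact: ex_RInt_Reals_aux_1.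
Qed.

Lemma primitive_continuity_pt s : 0 < s -> continuity_pt G s.
Proof.
move=> s0; apply: (continuity_pt_ext (fun z => (G z - G 0) + G 0)) => [z|]; first lra.
apply: continuity_pt_plus; last exact: continuity_pt_const.
apply/continuity_pt_filterlim.
exact (continuous_RInt_1 F 0 s _ (primitive_is_RInt_near s0)).
Qed.

Lemma primitive_derivable_pt_lim s : 0 < s -> continuity_pt F s -> derivable_pt_lim G s (F s).
Proof.
move=> s0 /continuity_pt_filterlim Fc.
have D : derivable_pt_lim (fun z => G z - G 0) s (F s).
  exact/is_derive_Reals/(is_derive_RInt _ _ 0)/Fc/(primitive_is_RInt_near s0).
apply/is_derive_Reals/(is_derive_ext (fun z => (G z - G 0) + G 0)) => [z|]; first lra.
apply/is_derive_Reals; rewrite -[F s]Rplus_0_r.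
exact: derivable_pt_lim_plus D (derivable_pt_lim_const (G 0) s).
Qed.

End primitive.
End RiemannPrimitive.
Import RiemannPrimitive.

From mathcomp Require Import ring lra.

Lemma is_derive_derivable_pt_lim (F : R -> R) (s l : R) :
  derivable_pt_lim F s l -> is_derive (s : R^o) 1 (F : R^o -> R^o) l.
Proof.
move=> Fl.
have quot :
    (fun h : R^o => h^-1 *: ((F (h *: (1 : R^o) + s) : R^o) - F s)) @ 0^' --> (l : R^o).
  apply/cvgrPdist_lt => eps /RltP /Fl [d Fd]; apply/nbhs_ballP.
  exists (pos d); first exact/RltP/cond_pos.
  move=> h /=; rewrite /ball /= sub0r normrN => /RltP hd /eqP h0.
  have -> : h%:A = h by exact: mulr1.
  move/RltP: (Fd h h0 hd); rewrite RabsE RdivE.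
  by rewrite distrC (addrC h s) mulrC.
apply: DeriveDef; last exact: cvg_lim.
by apply/cvg_ex; exists l.
Qed.

Lemma is_derive_mx_entries (a b : nat) (M : R -> 'M[R]_(a, b)) (s : R) (d : 'M[R]_(a, b)) :
  (forall i j, is_derive (s : R^o) 1 (fun r : R^o => (M r i j : R^o)) (d i j)) ->
  is_derive (s : R^o) 1 (M : R^o -> 'M[R]_(a, b)) d.
Proof.
move=> Md.
have dM : derivable (M : R^o -> 'M[R]_(a, b)) s 1 by apply/derivable_mxP => i j; case: (Md i j).
apply: DeriveDef => //; rewrite derive_mx //.
by apply/matrixP => i j; rewrite mxE derive_val.
Qed.

Lemma continuous_mx_entries (a b : nat) (phi : R -> 'M[R]_(a, b)) (s : R) :
  (forall i j, {for s, continuous (fun r => phi r i j)}) -> {for s, continuous phi}.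
Proof.
move=> phic; apply/cvg_mx_entourageP => A entA.
apply: filter_forall => i; apply: filter_forall => j.
have /(_ (fmap_filter _ _)) Aij := (cvg_entourageP _ _).1 (phic i j) A entA.
have : \forall r \near s, (phi s i j, phi r i j) \in A.
  by near=> r; rewrite inE; near: r; exact: Aij.
by [].
Unshelve. all: by end_near. Qed.

Lemma continuous_mx_entry (a b : nat) (phi : R -> 'M[R]_(a, b)) (s : R) i j :
  {for s, continuous phi} -> {for s, continuous (fun r => phi r i j)}.
Proof.
move=> phic; apply: (@continuous_comp _ _ _ phi (fun M : 'M[R]_(a, b) => M i j) s phic).
exact: coord_continuous.
Qed.

Lemma RInt_vec_translate (k : nat) (F y : R -> 'cV[R]_k) (t q : R) : 0 <= t -> 0 <= q ->
  RInt_vec F 0 (t + q) (y (t + q) - y 0) -> RInt_vec F 0 t (y t - y 0) ->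
  RInt_vec (fun p => F (t + p)) 0 q (y (t + q) - y t).
Proof.
move=> /RleP t0 /RleP q0 Ftq Ft i.
have [pr1 pr1E] := Ftq i; have [pr2 pr2E] := Ft i.
have [pr prE] := RiemannInt_translate pr1 pr2 t0 q0.
by exists pr; rewrite prE pr1E pr2E !mxE RminusE; ring.
Qed.

Section RInt_vec_primitive.
Variables (k : nat) (F y : R -> 'cV[R]_k).
Hypothesis Fy : forall r, 0 <= r -> RInt_vec F 0 r (y r - y 0).

Let Fy_entry i r : Rle 0 r -> exists pr : Riemann_integrable (fun p => F p i ord0) 0 r,
  RiemannInt pr = y r i ord0 - y 0 i ord0.
Proof. by move=> /RleP /Fy /(_ i) [pr prE]; exists pr; rewrite prE !mxE. Qed.

Lemma RInt_vec_continuous s : 0 < s -> {for s, continuous y}.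
Proof.
move=> /RltP s0; apply: continuous_mx_entries => i j; rewrite (ord1 j).
exact/continuity_ptE/(primitive_continuity_pt (Fy_entry i)).
Qed.

Lemma RInt_vec_is_derive s : 0 < s -> {for s, continuous F} ->
  is_derive (s : R^o) 1 (y : R^o -> 'cV[R]_k) (F s).
Proof.
move=> /RltP s0 Fc; apply: is_derive_mx_entries => i j; rewrite (ord1 j).
apply/is_derive_derivable_pt_lim/(primitive_derivable_pt_lim (Fy_entry i) s0).
exact/continuity_ptE/continuous_mx_entry.
Qed.

End RInt_vec_primitive.

Lemma mulmx_continuous_at (a b c : nat) (phi : R -> 'M[R]_(a, b)) (psi : R -> 'M[R]_(b, c))
  (s : R) : {for s, continuous phi} -> {for s, continuous psi} ->
  {for s, continuous (fun r => phi r *m psi r)}.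
Proof.
move=> phic psic; apply: continuous_mx_entries => i j.
rewrite /prop_for /continuous_at mxE; under eq_cvg do rewrite mxE.
apply: cvg_big => [|k _]; first exact: (@add_continuous R^o).
by apply: cvgM; exact: continuous_mx_entry.
Qed.

Lemma continuous_shift (V : topologicalType) (phi : R -> V) (s a : R) :
  {for (s + a : R), continuous phi} -> {for s, continuous (fun r : R => phi (r + a))}.
Proof.
move=> phic; change ((phi \o shift a) @ s --> phi (s + a)).
by rewrite (@cvg_comp_shift _ R^o).
Qed.

Lemma loc_lipschitz_continuous_comp (V W : normedModType R) (A : set V) (h : V -> W)
  (phi : R -> V) (s : R) :
  loc_lipschitz A h -> {for s, continuous phi} -> (\forall r \near s, A (phi r)) ->
  {for s, continuous (fun r => h (phi r))}.
Proof.
move=> hl phic Anear; have As := nbhs_singleton Anear.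
have [d [d0 [L hL]]] := hl _ As.
apply/cvgrPdist_lt => eps e0.
have L1 : 0 < `|L| + 1 by rewrite ltr_pwDr.
have m0 : 0 < Order.min d (eps / (`|L| + 1)) by rewrite lt_min d0 divr_gt0.
have /(_ (nbhs_filter s)) near_phi := (cvgrPdist_lt _ _).1 phic _ m0.
near=> t.
have At : A (phi t) by near: t.
have : `|phi s - phi t| < Order.min d (eps / (`|L| + 1)) by near: t.
rewrite lt_min => /andP[td te].
apply: le_lt_trans (hL _ _ As At _ _) _; [by rewrite subrr normr0 | by rewrite distrC |].
apply: le_lt_trans (_ : (`|L| + 1) * `|phi s - phi t| < eps).
  by apply: ler_wpM2r => //; apply: le_trans (ler_norm L) _; rewrite lerDl.
by rewrite -ltr_pdivlMl // mulrC.
Unshelve. all: by end_near. Qed.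

Lemma is_derive_partials (U V W : normedModType R) (J : U -> V -> W)
  (x : R -> U) (e : R -> V) (c : R) (dx : U) (de : V) :
  differentiable (fun q : U * V => J q.1 q.2) (x c, e c) ->
  is_derive (c : R^o) 1 x dx -> is_derive (c : R^o) 1 e de ->
  is_derive (c : R^o) 1 (fun r => J (x r) (e r))
    ('d (J^~ (e c)) (x c) dx + 'd (J (x c)) (e c) de).
Proof.
set Jp := fun q : U * V => J q.1 q.2 => dJ Dx De.
have dx' : differentiable (x : R^o -> U) c by apply/derivable1_diffP; exact: ex_derive.
have de' : differentiable (e : R^o -> V) c by apply/derivable1_diffP; exact: ex_derive.
have dxe : differentiable (fun r : R^o => (x r, e r)) c by exact: differentiable_pair.
have -> : (fun r => J (x r) (e r)) = Jp \o (fun r : R^o => (x r, e r)) by [].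
apply: DeriveDef; first exact/derivable1_diffP/differentiable_comp.
rewrite deriveE; last exact: differentiable_comp.
rewrite diff_comp // diff_pair //= -(deriveE _ dx') -(deriveE _ de').
rewrite !derive_val.
have -> : (dx, de) = (dx, 0) + (0, de) by congr (_, _); rewrite ?addr0 ?add0r.
rewrite linearD; congr (_ + _).
- have -> : J^~ (e c) = Jp \o (fun y : U => (y, e c)) by [].
  have dy : differentiable (fun y : U => (y, e c)) (x c).
    by apply: differentiable_pair => //; exact: differentiable_cst.
  by rewrite diff_comp // diff_pair //= diff_cst diff_val.
have -> : J (x c) = Jp \o (fun z : V => (x c, z)) by [].
have dz : differentiable (fun z : V => (x c, z)) (e c).
  by apply: differentiable_pair => //; exact: differentiable_cst.
by rewrite diff_comp // diff_pair //= diff_cst diff_val.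
Qed.

Lemma method_of_steps (P : R -> Prop) (tau : R) : 0 < tau ->
  (forall t, 0 <= t <= tau -> P t) ->
  (forall T s, tau <= T -> T <= s <= T + tau -> (forall r, 0 <= r <= T -> P r) -> P s) ->
  forall t, 0 <= t -> P t.
Proof.
move=> tau0 Pinit Pstep.
have Pk k : forall t, 0 <= t <= k.+1%:R * tau -> P t.
  elim: k => [|k IHk] t /andP[t0 tk]; first by apply: Pinit; rewrite t0 -(mul1r tau).
  have [tT|Tt] := leP t (k.+1%:R * tau); first by apply: IHk; rewrite t0.
  apply: (Pstep (k.+1%:R * tau)) => //; first by rewrite ler_peMl ?ler1n ?ltW.
  by rewrite (ltW Tt) /= -[X in _ + X]mul1r -mulrDl natr1.
move=> t t0; apply: (Pk (Num.truncn (t / tau))); rewrite t0 /=.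
by rewrite -ler_pdivrMr //; exact: ltW (truncnS_gt _).
Qed.

Lemma last_nonneg_point (h : R -> R) (T s : R) : T <= s ->
  (forall r, T <= r <= s -> {for r, continuous h}) -> 0 <= h T ->
  exists2 s0, T <= s0 <= s & 0 <= h s0 /\ forall r, s0 < r <= s -> h r < 0.
Proof.
move=> Ts hc hT.
pose S := [set r | T <= r <= s /\ 0 <= h r].
have ST : S T by rewrite /S /= lexx Ts.
have supS : has_sup S by split; [exists T | exists s => r [/andP[]]].
have Ts0 : T <= sup S by exact: sup_upper_bound.
have s0s : sup S <= s by apply: ge_sup; [exists T | move=> r [/andP[]]].
exists (sup S); first by rewrite Ts0.
split; last first.
  move=> r /andP[s0r rs]; rewrite ltNge; apply/negP => hr.
  have : r <= sup S.
    by apply: sup_upper_bound => //; split; rewrite // rs andbT (le_trans Ts0) // ltW.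
  by rewrite leNgt s0r.
rewrite leNgt; apply/negP => hs0.
have hs0c : {for sup S, continuous (h : R -> R^o)} by apply: hc; rewrite Ts0.
have hs0' : 0 < - h (sup S) by rewrite oppr_gt0.
have /(_ (nbhs_filter _))/nbhs_ballP[d d0 hd] := (cvgrPdist_lt _ _).1 hs0c _ hs0'.
have [r Sr s0dr] := sup_adherent d0 supS.
have rs0 : r <= sup S by exact: sup_upper_bound.
have : `|h (sup S) - h r| < - h (sup S).
  by apply: hd; rewrite /ball /= ger0_norm ?subr_ge0 //; lra.
case: Sr => _ hr.
rewrite -[X in X < _]normrN opprB ger0_norm; lra.
Qed.

Lemma barrier_ge0 (h D : R -> R) (a T s : R) : 0 < a -> T <= s ->
  (forall r, T <= r <= s -> {for r, continuous h}) ->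
  (forall c, T < c < s -> is_derive (c : R^o) 1 (h : R^o -> R^o) (D c)) ->
  (forall c, T < c < s -> - a < h c < 0 -> 0 < D c) ->
  0 <= h T -> 0 <= h s.
Proof.
move=> a0 Ts hc hD Dpos hT.
have [s0 /andP[Ts0 s0s] [hs0 neg]] := last_nonneg_point Ts hc hT.
have [ss0|s0s'] := leP s s0; first by have -> : s = s0 by apply/le_anti; rewrite ss0 s0s.
have hs0c : {for s0, continuous (h : R -> R^o)} by apply: hc; rewrite Ts0.
have /(_ (nbhs_filter _))/nbhs_ballP[d d0 hd] := (cvgrPdist_lt _ _).1 hs0c _ a0.
pose s2 := Order.min s (s0 + d / 2).
have s02 : s0 < s2 by rewrite lt_min s0s' ltrDl divr_gt0.
have s2s : s2 <= s by rewrite ge_min lexx.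
have s2d : s2 <= s0 + d / 2 by rewrite ge_min lexx orbT.
clearbody s2.
have hD' : forall c, c \in `]s0, s2[ -> is_derive (c : R^o) 1 (h : R^o -> R^o) (D c).
  move=> c; rewrite in_itv /= => /andP[c1 c2]; apply: hD.
  by rewrite (le_lt_trans Ts0 c1) (lt_le_trans c2 s2s).
have hc' : {within `[s0, s2], continuous h}.
  apply: continuous_in_subspaceT => r; rewrite inE /= in_itv /= => /andP[r1 r2].
  by apply: hc; rewrite (le_trans Ts0 r1) (le_trans r2 s2s).
have [c] := MVT s02 hD' hc'.
rewrite in_itv /= => /andP[c1 c2] mvt.
have hcneg : h c < 0 by apply: neg; rewrite c1 (ltW (lt_le_trans c2 s2s)).
have : `|h s0 - h c| < a.
  by apply: hd; rewrite /ball /= ltr0_norm ?subr_lt0 // opprB; lra.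
rewrite ltr_norml => /andP[_ hca].
have Dc : 0 < D c.
  apply: Dpos; last by rewrite hcneg andbT; lra.
  by rewrite (le_lt_trans Ts0 c1) (lt_le_trans c2 s2s).
have hs2 : h s2 < 0 by apply: neg; rewrite s02 s2s.
have : 0 < D c * (s2 - s0) by rewrite mulr_gt0 // subr_gt0.
rewrite -mvt; lra.
Qed.

Lemma ext_classK_lt0 (alpha : R -> R) : ext_classK alpha ->
  exists2 a, 0 < a & forall y, - a < y < 0 -> alpha y < 0.
Proof.
move=> [a [b [a0 [b0 [alpha0 [_ alpha_mono]]]]]]; exists a => // y /andP[ay y0].
rewrite -alpha0; apply: alpha_mono => //; first by rewrite ay (lt_trans y0 b0).
by rewrite oppr_lt0 a0 b0.
Qed.

Section closed_loop.
Variables (n m l : nat) (X : set 'cV[R]_n) (U : set 'cV[R]_m) (E Ecal : set 'cV[R]_l).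
Variables (f : 'cV[R]_n -> 'cV[R]_n) (g : 'cV[R]_n -> 'M[R]_(n, m)) (tau : R).
Variable Psi : R -> 'cV[R]_n -> (R -> 'cV[R]_m) -> 'cV[R]_n.
Variables (Gam : R -> 'cV[R]_l -> 'cV[R]_l) (dGam : R -> 'cV[R]_l -> 'cV[R]_l -> 'cV[R]_l).
Variables (H : 'cV[R]_n -> 'cV[R]_l -> R) (K : 'cV[R]_n -> 'cV[R]_l -> 'cV[R]_l -> 'cV[R]_m).
Variables (x : R -> 'cV[R]_n) (u : R -> 'cV[R]_m) (e edot : R -> 'cV[R]_l).

Hypothesis Htau : 0 < tau.
Hypothesis HPsi : forall x0 w, X x0 -> inB tau U w -> forall y : R -> 'cV[R]_n,
  pred_sol f g tau x0 w y <-> (forall th : R, 0 <= th <= tau -> y th = Psi th x0 w).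
Hypothesis Hx : forall t : R, 0 <= t ->
  X (x t) /\ RInt_vec (fun s => rhs f g (x s) (u (s - tau))) 0 t (x t - x 0).
Hypothesis HuB : forall t : R, 0 <= t -> inB tau U (ushift u t).
Hypothesis Henv : forall t th : R, 0 <= t -> 0 <= th <= tau ->
  e (t + th) = Gam th (e t) /\ edot (t + th) = dGam th (e t) (edot t).

Lemma prediction_exact (t th : R) : 0 <= t -> 0 <= th <= tau ->
  x (t + th) = Psi th (x t) (ushift u t).
Proof.
move=> t0 th0; apply: (HPsi (Hx t0).1 (HuB t0) (fun q => x (t + q))).1 => // q /andP[q0 _].
have -> : (fun p => rhs f g (x (t + p)) (ushift u t (p - tau))) =
          (fun p => rhs f g (x (t + p)) (u (t + p - tau))).
  by apply: funext => p; rewrite /ushift addrA.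
exact: (RInt_vec_translate (F := fun s => rhs f g (x s) (u (s - tau))) t0 q0
  (Hx (addr_ge0 t0 q0)).2 (Hx t0).2).
Qed.

Hypothesis Hu : forall t : R, 0 <= t ->
  u t = K (Psi tau (x t) (ushift u t)) (Gam tau (e t)) (dGam tau (e t) (edot t)).

Lemma input_feedback (t : R) : 0 <= t ->
  u t = K (x (t + tau)) (e (t + tau)) (edot (t + tau)).
Proof.
have tau_tau : 0 <= tau <= tau by rewrite lexx ltW.
move=> t0; have [-> ->] := Henv t0 tau_tau.
by rewrite prediction_exact // Hu.
Qed.

Lemma state_continuous (s : R) : 0 < s -> {for s, continuous x}.
Proof. exact: (RInt_vec_continuous (fun r r0 => (Hx r0).2)). Qed.

Hypothesis Hed : forall t : R, is_derive (t : R^o) 1 e (edot t).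

Lemma env_continuous (t : R) : {for t, continuous e}.
Proof.
have de : differentiable (e : R^o -> 'cV[R]_l) (t : R^o).
  by have Dt := Hed t; apply/derivable1_diffP; exact: ex_derive.
exact: differentiable_continuous de.
Qed.

Hypothesis Hedc : continuous edot.
Hypothesis HeE : forall t : R, 0 <= t -> E (e t) /\ Ecal (edot t).
Hypothesis HKlip : loc_lipschitz [set p : 'cV[R]_n * 'cV[R]_l * 'cV[R]_l |
  X p.1.1 /\ E p.1.2 /\ Ecal p.2] (fun p => K p.1.1 p.1.2 p.2).

Lemma input_continuous (t : R) : 0 < t -> {for t, continuous u}.
Proof.
move=> t0; pose p r := ((x (r + tau), e (r + tau)), edot (r + tau)).
have p_cont : {for t, continuous p}.
  have x_cont : {for t, continuous (fun r : R => x (r + tau))}.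
    by apply: continuous_shift; apply: state_continuous; rewrite addr_gt0.
  have e_cont : {for t, continuous (fun r : R => e (r + tau))}.
    by apply: continuous_shift; exact: env_continuous.
  have edot_cont : {for t, continuous (fun r : R => edot (r + tau))}.
    by apply: continuous_shift; exact: Hedc.
  exact: cvg_pair (cvg_pair x_cont e_cont) edot_cont.
have near_ge0 : \forall r \near t, 0 <= r by exact: lt_le_nbhsr.
have p_dom : \forall r \near t, [set q | X q.1.1 /\ E q.1.2 /\ Ecal q.2] (p r).
  apply: filterS near_ge0 => r r0; have r_tau := addr_ge0 r0 (ltW Htau).
  by split; [exact: (Hx r_tau).1 | exact: (HeE r_tau)].
have u_near : {near t, (fun r => K (p r).1.1 (p r).1.2 (p r).2) =1 u}.
  by apply: filterS near_ge0 => r r0; rewrite input_feedback.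
apply: cvg_trans (near_eq_cvg u_near) _; rewrite input_feedback ?ltW //.
exact: (loc_lipschitz_continuous_comp HKlip p_cont p_dom).
Qed.

Hypothesis Hf : loc_lipschitz X f.
Hypothesis Hg : loc_lipschitz X g.

Lemma delayed_rhs_continuous (c : R) : tau < c ->
  {for c, continuous (fun r => rhs f g (x r) (u (r - tau)))}.
Proof.
move=> tau_c; have c0 := lt_trans Htau tau_c.
have x_cont := state_continuous c0.
have x_dom : \forall r \near c, X (x r).
  by apply: filterS (lt_le_nbhsr c0) => r /Hx [].
have u_cont : {for c, continuous (fun r : R => u (r - tau))}.
  by apply: continuous_shift; apply: input_continuous; rewrite subr_gt0.
apply: continuousD; first exact: loc_lipschitz_continuous_comp Hf x_cont x_dom.
apply: mulmx_continuous_at u_cont.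
exact: loc_lipschitz_continuous_comp Hg x_cont x_dom.
Qed.

Lemma state_is_derive (c : R) : tau < c ->
  is_derive (c : R^o) 1 (x : R^o -> 'cV[R]_n) (rhs f g (x c) (u (c - tau))).
Proof.
move=> tau_c; apply: (RInt_vec_is_derive (fun r r0 => (Hx r0).2)).
  exact: lt_trans Htau tau_c.
exact: delayed_rhs_continuous.
Qed.

Hypothesis HC1 : C1_on X E H.

Let H_differentiable t : 0 <= t ->
  differentiable (fun q : 'cV[R]_n * 'cV[R]_l => (H q.1 q.2 : R^o)) (x t, e t).
Proof.
have [D [_ [XE_D [D_diff _]]]] := HC1.
by move=> t0; apply/D_diff/XE_D; [exact: (Hx t0).1 | exact: (HeE t0).1].
Qed.

Lemma barrier_continuous (s : R) : 0 < s ->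
  {for s, continuous (fun r => (H (x r) (e r) : R^o))}.
Proof.
move=> s0; have x_cont := state_continuous s0.
have e_cont : {for s, continuous e} by exact: env_continuous.
have xe_cont : {for s, continuous (fun r => (x r, e r))} by exact: cvg_pair x_cont e_cont.
exact: continuous_comp xe_cont (differentiable_continuous (H_differentiable (ltW s0))).
Qed.

Lemma barrier_is_derive (c : R) : tau < c ->
  is_derive (c : R^o) 1 (fun r : R^o => (H (x r) (e r) : R^o))
    (Hdot f g H (x c) (e c) (edot c) (u (c - tau))).
Proof.
move=> tau_c; have c0 := ltW (lt_trans Htau tau_c).
exact: is_derive_partials (H_differentiable c0) (state_is_derive tau_c) (Hed c).
Qed.

Variable alpha : R -> R.
Hypothesis HKcond : forall x0 e0 ed0 w, Se X E H x0 e0 -> Ecal ed0 -> inB tau U w ->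
  let xp := Psi tau x0 w in let ep := Gam tau e0 in let edp := dGam tau e0 ed0 in
  - alpha (H xp ep) <= Hdot f g H xp ep edp (K xp ep edp).

Lemma barrier_dot_ge (c : R) : tau < c -> 0 <= H (x (c - tau)) (e (c - tau)) ->
  - alpha (H (x c) (e c)) <= Hdot f g H (x c) (e c) (edot c) (u (c - tau)).
Proof.
move=> tau_c Hc; have c0 : 0 <= c - tau by rewrite subr_ge0 ltW.
have tau_tau : 0 <= tau <= tau by rewrite lexx ltW.
have Se_c : Se X E H (x (c - tau)) (e (c - tau)).
  by split; [exact: (Hx c0).1 | split => //; exact: (HeE c0).1].
have := HKcond Se_c (HeE c0).2 (HuB c0); cbv zeta.
rewrite -Hu // -prediction_exact // -(Henv c0 tau_tau).1 -(Henv c0 tau_tau).2.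
(* Arguments of type [R] are parsed in [R_scope], so the time shifts are [Rplus]/[Rminus]. *)
by rewrite RplusE RminusE subrK.
Qed.

Hypothesis Hass2 : forall th : R, 0 <= th <= tau ->
  Se X E H (Psi th (x 0) (ushift u 0)) (Gam th (e 0)).

Lemma barrier_init (s : R) : 0 <= s <= tau -> 0 <= H (x s) (e s).
Proof.
move=> s_tau; have [_ [_]] := Hass2 s_tau.
by rewrite -prediction_exact // -(Henv (lexx 0) s_tau).1 RplusE add0r.
Qed.

Hypothesis Halpha : ext_classK alpha.

Lemma barrier_nonneg (t : R) : 0 <= t -> 0 <= H (x t) (e t).
Proof.
have [a a0 alpha_lt0] := ext_classK_lt0 Halpha.
move: t; apply: (method_of_steps (P := fun r => 0 <= H (x r) (e r)) Htau barrier_init).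
move=> T s tau_T /andP[Ts sT] past_nonneg.
have T0 := lt_le_trans Htau tau_T.
apply: (barrier_ge0 (h := fun r => H (x r) (e r))
  (D := fun c => Hdot f g H (x c) (e c) (edot c) (u (c - tau))) a0 Ts).
- move=> r /andP[Tr _]; exact: barrier_continuous (lt_le_trans T0 Tr).
- move=> c /andP[Tc _]; exact: barrier_is_derive (le_lt_trans tau_T Tc).
- move=> c /andP[Tc cs] /andP[ac c_lt0].
  have tau_c := le_lt_trans tau_T Tc.
  apply: lt_le_trans (barrier_dot_ge tau_c _); first by rewrite oppr_gt0 alpha_lt0 // ac.
  by apply: past_nonneg; rewrite subr_ge0 (ltW tau_c) lerBlDr (le_trans (ltW cs) sT).
- by apply: past_nonneg; rewrite (ltW T0) lexx.
Qed.

End closed_loop.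

Theorem theorem4
  (n m l : nat) (X : set 'cV[R]_n) (U : set 'cV[R]_m) (E Ecal : set 'cV[R]_l)
  (f : 'cV[R]_n -> 'cV[R]_n) (g : 'cV[R]_n -> 'M[R]_(n, m)) (tau : R)
  (Psi : R -> 'cV[R]_n -> (R -> 'cV[R]_m) -> 'cV[R]_n)
  (Gam : R -> 'cV[R]_l -> 'cV[R]_l) (dGam : R -> 'cV[R]_l -> 'cV[R]_l -> 'cV[R]_l)
  (H : 'cV[R]_n -> 'cV[R]_l -> R) (alpha : R -> R)
  (K : 'cV[R]_n -> 'cV[R]_l -> 'cV[R]_l -> 'cV[R]_m)
  (x : R -> 'cV[R]_n) (u : R -> 'cV[R]_m) (e edot : R -> 'cV[R]_l)
  (HXopen : open X) (HXconn : connected X)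
  (Hf : loc_lipschitz X f) (Hg : loc_lipschitz X g)
  (Htau : 0 < tau)
  (HGam : forall (th : R) e0, 0 <= th <= tau -> E e0 -> E (Gam th e0))
  (HdGam : forall (th : R) e0 ed0, 0 <= th <= tau -> E e0 -> Ecal ed0 -> Ecal (dGam th e0 ed0))
  (HPsi : forall x0 w, X x0 -> inB tau U w -> forall y : R -> 'cV[R]_n,
      pred_sol f g tau x0 w y <-> (forall th : R, 0 <= th <= tau -> y th = Psi th x0 w))
  (HC1 : C1_on X E H)
  (HECBF : ECBF X U E Ecal f g tau Psi Gam dGam H alpha)
  (HKlip : loc_lipschitz [set p : 'cV[R]_n * 'cV[R]_l * 'cV[R]_l |
                            X p.1.1 /\ E p.1.2 /\ Ecal p.2]
                         (fun p => K p.1.1 p.1.2 p.2))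
  (HKcond : forall x0 e0 ed0 w, Se X E H x0 e0 -> Ecal ed0 -> inB tau U w ->
      let xp := Psi tau x0 w in let ep := Gam tau e0 in let edp := dGam tau e0 ed0 in
      - alpha (H xp ep) <= Hdot f g H xp ep edp (K xp ep edp))
  (Hx : forall t : R, 0 <= t ->
      X (x t) /\ RInt_vec (fun s => rhs f g (x s) (u (s - tau))) 0 t (x t - x 0))
  (HuB : forall t : R, 0 <= t -> inB tau U (ushift u t))
  (Hu : forall t : R, 0 <= t ->
      u t = K (Psi tau (x t) (ushift u t)) (Gam tau (e t)) (dGam tau (e t) (edot t)))
  (Hed : forall t : R, is_derive (t : R^o) 1 e (edot t))
  (Hedc : continuous edot)
  (HeE : forall t : R, 0 <= t -> E (e t) /\ Ecal (edot t))
  (Henv : forall t th : R, 0 <= t -> 0 <= th <= tau ->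
      e (t + th) = Gam th (e t) /\ edot (t + th) = dGam th (e t) (edot t))
  (Hass2 : forall th : R, 0 <= th <= tau ->
      Se X E H (Psi th (x 0) (ushift u 0)) (Gam th (e 0))) :
  Se X E H (x 0) (e 0) -> forall t : R, 0 <= t -> Se X E H (x t) (e t).
Proof.
move=> _ t t0; split; first exact: (Hx t t0).1.
split; first exact: (HeE t t0).1.
exact: (barrier_nonneg Htau HPsi Hx HuB Henv Hu Hed Hedc HeE HKlip Hf Hg HC1 HKcond Hass2
  HECBF.1 t0).
Qed.
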